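(* Let $T$ be a finite rooted tree in which every inner node has at least two children, with node set $V$ and leaf set $L$. Let $S\subseteq V\setminus L$ and let $(\pi,\sigma)$ be a pair of injective maps $S\to L$ identifying $S$ with unique request, and put $A=\pi(S)$, $B=\sigma(S)$. Then for each inner node $x$ exactly one of the following three cases holds: (1) $x\notin S$, $x$ is not requested in $(\pi,\sigma)$, and for each child $c$ of $x$, $|A\cap V(T_c)|=|B\cap V(T_c)|$; (2) $x\notin S$, $x$ is requested in $(\pi,\sigma)$, and there is a leaf $z\in(A\cup B)\cap V(T_x)$ such that for each child $c$ of $x$, $|(A\setminus\{z\})\cap V(T_c)|=|(B\setminus\{z\})\cap V(T_c)|$; (3) $x\in S$, $x$ is requested in $(\pi,\sigma)$, and there are leaves $a\in A\cap V(T_x)$ and $b\in B\cap V(T_x)$ such that for each child $c$ of $x$, $|(A\setminus\{a\})\cap V(T_c)|=|(B\setminus\{b\})\cap V(T_c)|$ and $\{a,b\}\not\subseteq V(T_c)$. In particular, $x\in S$ if and only if there exist $a\in A\cap V(T_x)$ and $b\in B\cap V(T_x)$ such that for each child $c$ of $x$, $|(A\setminus\{a\})\cap V(T_c)|=|(B\setminus\{b\})\cap V(T_c)|$ and $\{a,b\}\not\subseteq V(T_c)$.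
   Context: Every node is its own ancestor and descendant; $T_x$ is the subtree rooted at $x$ and $V(T_x)$ the set of descendants of $x$. A pair $(\pi,\sigma)$ of injective maps from $S\subseteq V\setminus L$ to $L$ identifies $S$ if for each $s\in S$, $s$ is the least common ancestor of $\pi(s)$ and $\sigma(s)$. For $s\in S$, a node $x$ is $s$-requested in $(\pi,\sigma)$ if $x$ lies on the path of $T$ from $\pi(s)$ to $\sigma(s)$; it is requested if it is $s$-requested for some $s\in S$. The pair has unique request if every node is $s$-requested for at most one $s\in S$. *)

From mathcomp Require Import all_boot.
Set Implicit Arguments. Unset Strict Implicit. Unset Printing Implicit Defensive.

(* A finite rooted tree: nodes form the finType [V]; [parent] maps each
   non-root node to its parent, and [parent root = root].  Every node
   reaches the root by iterating [parent]. *)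
Section Tree.
Variables (V : finType) (root : V) (parent : V -> V).

Definition is_rooted_tree : Prop :=
  parent root = root /\ forall x : V, fconnect parent x root.

(* [desc y x] : y is a descendant of x (every node is its own descendant). *)
Definition desc (y x : V) : bool := fconnect parent y x.

Definition subtree (x : V) : {set V} := [set y | desc y x].

Definition children (x : V) : {set V} :=
  [set c | (c != root) && (parent c == x)].

Definition is_leaf (x : V) : bool := children x == set0.
Definition leaves : {set V} := [set x | is_leaf x].

Definition inner_branching : Prop :=
  forall x : V, ~~ is_leaf x -> 1 < #|children x|.

Definition is_lca (w u v : V) : bool :=
  [&& desc u w, desc v w & [forall y, (desc u y && desc v y) ==> desc w y]].

(* z lies on the tree path from u to v *)
Definition on_path (z u v : V) : bool :=
  (desc u z || desc v z) && [forall y, (desc u y && desc v y) ==> desc z y].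

Definition identifies (S : {set V}) (pi sigma : V -> V) : Prop :=
  forall s, s \in S -> is_lca s (pi s) (sigma s).

Definition s_requested (S : {set V}) (pi sigma : V -> V) (s x : V) : Prop :=
  s \in S /\ on_path x (pi s) (sigma s).

Definition requested (S : {set V}) (pi sigma : V -> V) (x : V) : Prop :=
  exists s, s_requested S pi sigma s x.

Definition unique_request (S : {set V}) (pi sigma : V -> V) : Prop :=
  forall x s1 s2, s_requested S pi sigma s1 x -> s_requested S pi sigma s2 x ->
    s1 = s2.

End Tree.

(* For a child [c] of [x], the pairs [(pi s, sigma s)] with both ends or no end
   below [c] contribute equally to the two counts; a pair with exactly one end
   below [c] has [x] on its path.  By unique request at most one pair, the
   requester of [x], is unbalanced, so discarding its endpoints below [x]
   balances every child.  If [x \in S] both endpoints lie below [x], in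
   different children; otherwise exactly one does.  Conversely, witnesses [a]
   and [b] in different children unbalance both children, so the requester of
   [x] has an endpoint in each and hence is [x] itself. *)

From Pilot Require Import Defs.
From mathcomp Require Import all_boot.
Set Implicit Arguments. Unset Strict Implicit. Unset Printing Implicit Defensive.

Lemma setD1I_id (T : finType) (B X : {set T}) y :
  y \notin B :&: X -> (B :\ y) :&: X = B :&: X.
Proof.
rewrite inE => yBX; apply/setP => z; rewrite !inE.
by case: eqVneq => //= ->; rewrite (negbTE yBX).
Qed.

Lemma cardsD1I (T : finType) (A X : {set T}) a :
  a \in A -> a \in X -> #|A :&: X| = #|(A :\ a) :&: X|.+1.
Proof.
move=> Aa Xa; rewrite (cardsD1 a) inE Aa Xa add1n; congr _.+1.
by apply: eq_card => y; rewrite !inE andbA.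
Qed.

Lemma card_setD1I_neq (T : finType) (A B X : {set T}) a b :
  a \in A -> a \in X -> b \notin X ->
  #|(A :\ a) :&: X| = #|(B :\ b) :&: X| -> #|A :&: X| != #|B :&: X|.
Proof.
move=> Aa Xa bNX card_eq; rewrite (cardsD1I Aa Xa) card_eq.
by rewrite setD1I_id ?inE ?(negbTE bNX) ?andbF // eqn_leq ltnn.
Qed.

Section ImsetCounting.
Variables (aT rT : finType).

Lemma card_imsetI (f : aT -> rT) (P : {set aT}) (X : {set rT}) :
  {in P &, injective f} -> #|(f @: P) :&: X| = #|[set s in P | f s \in X]|.
Proof.
move=> f_inj; have -> : (f @: P) :&: X = f @: [set s in P | f s \in X].
  apply/setP => y; rewrite inE; apply/andP/imsetP.
    by case=> /imsetP [s Ps ->] fsX; exists s; rewrite // inE Ps.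
  by case=> s; rewrite inE => /andP [Ps fsX] ->; rewrite imset_f.
rewrite card_in_imset // => s t.
by rewrite !inE => /andP [Ps _] /andP [Pt _]; apply: f_inj.
Qed.

Lemma card_imsetI_eq (f g : aT -> rT) (P : {set aT}) (X : {set rT}) :
  {in P &, injective f} -> {in P &, injective g} ->
  {in P, forall s, (f s \in X) = (g s \in X)} ->
  #|(f @: P) :&: X| = #|(g @: P) :&: X|.
Proof.
move=> f_inj g_inj fgX; rewrite !card_imsetI //; apply: eq_card => s.
by rewrite !inE; apply/andP/andP => -[Ps]; rewrite fgX.
Qed.

Lemma card_imsetI_neq (f g : aT -> rT) (P : {set aT}) (X : {set rT}) :
  {in P &, injective f} -> {in P &, injective g} ->
  #|(f @: P) :&: X| != #|(g @: P) :&: X| ->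
  exists2 s, s \in P & (f s \in X) != (g s \in X).
Proof.
move=> f_inj g_inj card_neq; apply/exists_inP; apply: contra_neqT card_neq.
by move=> /exists_inPn no_sep; apply: card_imsetI_eq => // s /no_sep /negPn /eqP.
Qed.

Lemma imsetD1_in (f : aT -> rT) (P : {set aT}) s :
  {in P &, injective f} -> s \in P -> (f @: P) :\ f s = f @: (P :\ s).
Proof.
move=> f_inj Ps; apply/setP => y; rewrite !inE; apply/andP/imsetP.
  case=> fs_y /imsetP [t Pt y_ft]; exists t => //; rewrite !inE Pt andbT.
  by apply: contraNneq fs_y => ts; rewrite y_ft ts.
case=> t /setD1P [ts Pt] ->; rewrite imset_f //; split => //.
by apply: contra_neq ts => /f_inj ->.
Qed.

Lemma card_imsetD1I_endpoint (f g : aT -> rT) (P : {set aT}) (X : {set rT}) s :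
  {in P &, injective f} -> {in P &, injective g} -> s \in P ->
  f s \notin g @: P -> g s \notin X ->
  #|f @: (P :\ s) :&: X| = #|g @: (P :\ s) :&: X| ->
  #|(f @: P :\ f s) :&: X| = #|(g @: P :\ f s) :&: X|.
Proof.
move=> f_inj g_inj Ps fsNg gsNX card_eq.
rewrite imsetD1_in // setD1I_id ?inE ?(negbTE fsNg) //.
rewrite -[g @: P :&: X](@setD1I_id _ _ _ (g s)) ?inE ?(negbTE gsNX) ?andbF //.
by rewrite imsetD1_in.
Qed.

End ImsetCounting.

Section Tree.
Variables (V : finType) (root : V) (parent : V -> V).
Hypothesis tree : is_rooted_tree root parent.

Local Notation desc := (desc parent).
Local Notation children := (children root parent).
Local Notation on_path := (on_path parent).
Local Notation is_lca := (is_lca parent).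

Lemma descP y x : reflect (exists n, iter n parent y = x) (desc y x).
Proof.
apply: (iffP idP) => [yx | [n <-]]; last exact: fconnect_iter.
by exists (findex parent y x); apply: iter_findex.
Qed.

Lemma desc_refl x : desc x x.
Proof. exact: connect0. Qed.

Lemma desc_trans u v w : desc u v -> desc v w -> desc u w.
Proof. exact: connect_trans. Qed.

Lemma parent_fixed_root y : parent y = y -> y = root.
Proof. by move=> fixed_y; case: tree => _ /(_ y) /descP [n <-]; rewrite iter_fix. Qed.

Lemma desc_antisym u v : desc u v -> desc v u -> u = v.
Proof.
move=> /descP [[|n] uv] /descP [m vu]; first by [].
(* The orbit of [u] is periodic, yet reaches the fixed point [root]. *)
have u_periodic t : iter ((m + n.+1) * t) parent u = u.
  by elim: t => [|t IH]; rewrite ?muln0 // mulnS iterD IH iterD uv vu.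
have [_ /(_ u) /descP [j u_root]] := tree.
suff u_eq_root : u = root by rewrite -uv u_eq_root iter_fix //; case: tree.
have k_gt0 : 0 < m + n.+1 by rewrite addnS.
rewrite -(u_periodic j) -(subnK (leq_pmull j k_gt0)).
by rewrite iterD u_root iter_fix //; case: tree.
Qed.

Lemma desc_total u y c : desc u y -> desc u c -> desc y c || desc c y.
Proof.
move=> /descP [n <-] /descP [m <-]; case: (leqP n m) => [/subnK | /ltnW /subnK] <-.
  by rewrite iterD /desc fconnect_iter.
by rewrite iterD /desc fconnect_iter orbT.
Qed.

Lemma desc_parent c y : desc c y -> c != y -> desc (parent c) y.
Proof.
by move=> /descP [[|n] <-]; rewrite ?eqxx // /desc iterSr fconnect_iter.
Qed.

Lemma child_desc x c : c \in children x -> desc c x.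
Proof. by rewrite inE => /andP [_ /eqP <-]; apply: fconnect1. Qed.

Lemma child_not_anc x c : c \in children x -> ~~ desc x c.
Proof.
move=> cx; apply/negP => /(desc_antisym (child_desc cx)) c_eq_x.
move: cx; rewrite inE c_eq_x => /andP [x_not_root /eqP /parent_fixed_root x_root].
by rewrite x_root eqxx in x_not_root.
Qed.

Lemma children_disjoint x c1 c2 u :
  c1 \in children x -> c2 \in children x -> desc u c1 -> desc u c2 -> c1 = c2.
Proof.
wlog c1c2 : c1 c2 / desc c1 c2.
  move=> gen c1x c2x uc1 uc2; case/orP: (desc_total uc1 uc2) => [c1c2 | c2c1].
    exact: gen.
  by apply/esym; apply: gen.
move=> c1x c2x _ _; apply/eqP; apply: contraNT (child_not_anc c2x) => c1_neq_c2.
by move: (desc_parent c1c2 c1_neq_c2); rewrite inE in c1x; case/andP: c1x => _ /eqP ->.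
Qed.

Lemma desc_child u x :
  desc u x -> u != x -> exists2 c, c \in children x & desc u c.
Proof.
move=> /descP [n]; elim: n => [<-|n IH]; first by rewrite eqxx.
rewrite iterS => ux u_neq_x.
case: (eqVneq (iter n parent u) root) => [u_root | u_not_root].
  by apply: IH => //; rewrite -ux u_root; case: tree.
exists (iter n parent u); last exact: fconnect_iter.
by rewrite inE u_not_root ux eqxx.
Qed.

Lemma on_pathC z u v : on_path z u v = on_path z v u.
Proof.
rewrite /Defs.on_path orbC; congr (_ && _).
by apply: eq_forallb => y; rewrite andbC.
Qed.

Lemma on_path_endpoint u v : on_path u u v.
Proof.
rewrite /Defs.on_path desc_refl; apply/forallP => y; apply/implyP.
by case/andP.
Qed.

Lemma lca_on_path s u v : is_lca s u v -> on_path s u v.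
Proof. by case/and3P => us vs lca_s; rewrite /Defs.on_path us. Qed.

Lemma on_path_child x c u v :
  c \in children x -> desc u c != desc v c -> on_path x u v.
Proof.
move=> cx; wlog uc : u v / desc u c.
  move=> gen sep; case uc: (desc u c); first exact: gen.
  rewrite on_pathC; apply: gen; last by rewrite eq_sym.
  by move: sep; rewrite uc; case: (desc v c).
rewrite uc => sep; have vNc : ~~ desc v c by move: sep; case: (desc v c).
rewrite /Defs.on_path (desc_trans uc (child_desc cx)); apply/forallP => y.
apply/implyP => /andP [uy vy]; case/orP: (desc_total uy uc) => [yc | cy].
  by rewrite (desc_trans vy yc) in vNc.
have c_neq_y : c != y by apply: contraNneq vNc => ->.
by move: (desc_parent cy c_neq_y); rewrite inE in cx; case/andP: cx => _ /eqP ->.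
Qed.

Lemma lca_on_path_below s x u v :
  is_lca s u v -> on_path x u v -> desc u x -> desc v x -> s = x.
Proof.
case/and3P=> us vs /forallP lca_s /andP [_ /forallP x_below] ux vx.
apply: desc_antisym; first by have := lca_s x; rewrite ux vx.
by have := x_below s; rewrite us vs.
Qed.

Lemma lca_on_path_split s x u v :
  is_lca s u v -> on_path x u v -> s != x -> desc u x != desc v x.
Proof.
move=> lca_s xuv; apply: contra_neq => ux_eq_vx.
move: (xuv) => /andP [ux_or_vx _]; rewrite -ux_eq_vx orbb in ux_or_vx.
by apply: (lca_on_path_below lca_s xuv); rewrite -?ux_eq_vx.
Qed.

Lemma separated_children x c1 c2 u v :
  c1 \in children x -> c2 \in children x -> c1 != c2 ->
  desc u c1 != desc v c1 -> desc u c2 != desc v c2 -> desc u x && desc v x.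
Proof.
move=> c1x c2x c1_neq_c2 sep1 sep2.
have below w c : c \in children x -> desc w c -> desc w x.
  by move=> cx wc; apply: desc_trans wc (child_desc cx).
have apart w : desc w c1 -> desc w c2 -> False.
  by move=> wc1 wc2; rewrite (children_disjoint c1x c2x wc1 wc2) eqxx in c1_neq_c2.
case uc1: (desc u c1); move: sep1 sep2; rewrite uc1.
- case: (desc v c1) => // _; case uc2: (desc u c2); first by case: (apart u).
  by case vc2: (desc v c2) => // _; rewrite (below u c1) ?(below v c2).
- case vc1: (desc v c1) => // _; case vc2: (desc v c2); first by case: (apart v).
  by case uc2: (desc u c2) => // _; rewrite (below u c2) ?(below v c1).
Qed.

End Tree.

Section Identification.
Variables (V : finType) (root : V) (parent : V -> V).
Hypothesis tree : is_rooted_tree root parent.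
Variables (S : {set V}) (pi sigma : V -> V).
Hypotheses (S_inner : forall s, s \in S -> ~~ is_leaf root parent s)
  (pi_inj : {in S &, injective pi}) (sigma_inj : {in S &, injective sigma})
  (pi_leaf : forall s, s \in S -> is_leaf root parent (pi s))
  (sigma_leaf : forall s, s \in S -> is_leaf root parent (sigma s))
  (S_lca : identifies parent S pi sigma)
  (uniq_req : unique_request parent S pi sigma).

Local Notation desc := (desc parent).
Local Notation subtree := (subtree parent).
Local Notation children := (children root parent).
Local Notation leaves := (leaves root parent).
Local Notation on_path := (on_path parent).
Local Notation requested := (requested parent S pi sigma).
Local Notation s_requested := (s_requested parent S pi sigma).
Local Notation A := (pi @: S).
Local Notation B := (sigma @: S).

Lemma requestedP x : reflect (requested x) [exists s in S, on_path x (pi s) (sigma s)].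
Proof. by apply: (iffP exists_inP) => [[s Ss xs] | [s [Ss xs]]]; exists s. Qed.

Lemma self_requested s : s \in S -> s_requested s s.
Proof. by move=> Ss; split; last exact: lca_on_path (S_lca Ss). Qed.

Lemma pi_neq_sigma s1 s2 : s1 \in S -> s2 \in S -> pi s1 != sigma s2.
Proof.
move=> S1 S2; apply/eqP => shared_leaf.
have s1_eq_s2 : s1 = s2.
  apply: (uniq_req (x := pi s1)); split; rewrite ?on_path_endpoint //.
  by rewrite shared_leaf on_pathC on_path_endpoint.
subst s2; have lca_s1 := S_lca S1.
have s1_leaf : s1 = pi s1.
  apply: (lca_on_path_below tree lca_s1 (on_path_endpoint _ _ (sigma s1))).
    exact: desc_refl.
  by rewrite shared_leaf desc_refl.
by move: (S_inner S1); rewrite {1}s1_leaf pi_leaf.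
Qed.

Lemma card_subtree_balanced (P : {set V}) x c :
  P \subset S -> c \in children x -> {in P, forall s, ~~ on_path x (pi s) (sigma s)} ->
  #|(pi @: P) :&: subtree c| = #|(sigma @: P) :&: subtree c|.
Proof.
move=> /subsetP PS cx unrequested.
apply: card_imsetI_eq; [exact: sub_in2 pi_inj | exact: sub_in2 sigma_inj |].
move=> s Ps; rewrite !inE; apply/eqP; apply: contraNT (unrequested s Ps).
exact: on_path_child cx.
Qed.

Lemma card_subtree_unrequested x c :
  ~ requested x -> c \in children x -> #|A :&: subtree c| = #|B :&: subtree c|.
Proof.
move=> xNreq cx; apply: card_subtree_balanced cx _ => // s Ss.
by apply/negP => xs; apply: xNreq; exists s.
Qed.

Lemma card_subtree_requester s x c : s_requested s x -> c \in children x ->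
  #|pi @: (S :\ s) :&: subtree c| = #|sigma @: (S :\ s) :&: subtree c|.
Proof.
move=> s_req cx; apply: card_subtree_balanced cx _; first exact: subD1set.
move=> t /setD1P [ts St]; apply/negP => xt.
by rewrite (uniq_req (conj St xt) s_req) eqxx in ts.
Qed.

Lemma in_S_witnesses x : x \in S ->
  exists a b, [/\ a \in leaves, b \in leaves,
    a \in A :&: subtree x, b \in B :&: subtree x &
    forall c, c \in children x ->
      #|(A :\ a) :&: subtree c| = #|(B :\ b) :&: subtree c|
      /\ ~~ ((a \in subtree c) && (b \in subtree c))].
Proof.
move=> Sx; have /and3P [px sx /forallP lca_x] := S_lca Sx.
exists (pi x), (sigma x); split.
- by rewrite inE pi_leaf.
- by rewrite inE sigma_leaf.
- by rewrite inE imset_f // inE.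
- by rewrite inE imset_f // inE.
move=> c cx; rewrite !imsetD1_in //; split.
  exact: card_subtree_requester (self_requested Sx) cx.
by rewrite !inE; move: (child_not_anc tree cx); apply: contra; apply/implyP.
Qed.

Lemma requested_notin_S_witness x : x \notin S -> requested x ->
  exists2 z, z \in leaves /\ z \in (A :|: B) :&: subtree x &
    forall c, c \in children x ->
      #|(A :\ z) :&: subtree c| = #|(B :\ z) :&: subtree c|.
Proof.
move=> xNS [s [Ss xs]].
have s_neq_x : s != x by apply: contraNneq xNS => <-.
have outside w c : c \in children x -> ~~ desc w x -> w \notin subtree c.
  by move=> cx; apply: contra; rewrite inE => wc; apply: desc_trans wc (child_desc cx).
move: (lca_on_path_split tree (S_lca Ss) xs s_neq_x).
case px: (desc (pi s) x); case sx: (desc (sigma s) x) => // _.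
- exists (pi s); first by rewrite !inE pi_leaf // imset_f.
  move=> c cx; apply: card_imsetD1I_endpoint => //.
  + by apply/imsetP => -[t St]; apply/eqP; apply: pi_neq_sigma.
  + by apply: outside cx _; rewrite sx.
  + exact: card_subtree_requester (conj Ss xs) cx.
- exists (sigma s); first by rewrite !inE sigma_leaf // imset_f ?orbT.
  move=> c cx; apply/esym; apply: card_imsetD1I_endpoint => //.
  + by apply/imsetP => -[t St]; apply/eqP; rewrite eq_sym; apply: pi_neq_sigma.
  + by apply: outside cx _; rewrite px.
  + exact/esym/(card_subtree_requester (conj Ss xs) cx).
Qed.

Lemma witnesses_in_S x : ~~ is_leaf root parent x ->
  (exists a b, [/\ a \in A :&: subtree x, b \in B :&: subtree x &
    forall c, c \in children x ->
      #|(A :\ a) :&: subtree c| = #|(B :\ b) :&: subtree c|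
      /\ ~~ ((a \in subtree c) && (b \in subtree c))]) ->
  x \in S.
Proof.
move=> xNleaf [_ [_ [/setIP [/imsetP [sa Sa ->] pa] /setIP [/imsetP [sb Sb ->] sb_x]]]].
move=> bal; rewrite !inE in pa sb_x.
have [ca cax pca] : exists2 c, c \in children x & desc (pi sa) c.
  by apply: (desc_child tree pa); apply: contraNneq xNleaf => <-; apply: pi_leaf.
have [cb cbx scb] : exists2 c, c \in children x & desc (sigma sb) c.
  by apply: (desc_child tree sb_x); apply: contraNneq xNleaf => <-; apply: sigma_leaf.
have [card_a apart_a] := bal ca cax; have [card_b apart_b] := bal cb cbx.
have pca' : pi sa \in subtree ca by rewrite inE.
have scb' : sigma sb \in subtree cb by rewrite inE.
rewrite pca' /= in apart_a; rewrite scb' andbT in apart_b.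
have ca_neq_cb : ca != cb by apply: contraNneq apart_a => ->; rewrite inE.
have [t1 St1 sep1] := card_imsetI_neq pi_inj sigma_inj
  (card_setD1I_neq (imset_f pi Sa) pca' apart_a card_a).
have [t2 St2 sep2] := card_imsetI_neq sigma_inj pi_inj
  (card_setD1I_neq (imset_f sigma Sb) scb' apart_b (esym card_b)).
rewrite !inE in sep1 sep2; rewrite eq_sym in sep2.
have t1_req : s_requested t1 x by split => //; apply: on_path_child cax sep1.
have t2_req : s_requested t2 x by split => //; apply: on_path_child cbx sep2.
move: sep2; rewrite -(uniq_req t1_req t2_req) => sep2.
case/andP: (separated_children tree cax cbx ca_neq_cb sep1 sep2) => px sx.
by rewrite -(lca_on_path_below tree (S_lca St1) t1_req.2 px sx).
Qed.

End Identification.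

Theorem lemma3p5 (V : finType) (root : V) (parent : V -> V)
  (Htree : is_rooted_tree root parent)
  (Hbranch : inner_branching root parent)
  (S : {set V}) (pi sigma : V -> V)
  (HS : forall s, s \in S -> ~~ is_leaf root parent s)
  (Hpi_inj : {in S &, injective pi}) (Hsigma_inj : {in S &, injective sigma})
  (Hpi_leaf : forall s, s \in S -> is_leaf root parent (pi s))
  (Hsigma_leaf : forall s, s \in S -> is_leaf root parent (sigma s))
  (Hid : identifies parent S pi sigma)
  (Huniq : unique_request parent S pi sigma) :
  let A := pi @: S in
  let B := sigma @: S in
  forall x : V, ~~ is_leaf root parent x ->
  let C1 :=
    [/\ x \notin S, ~ requested parent S pi sigma x &
        forall c, c \in children root parent x ->
          #|A :&: subtree parent c| = #|B :&: subtree parent c| ] in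
  let C2 :=
    [/\ x \notin S, requested parent S pi sigma x &
        exists2 z, (z \in leaves root parent) /\ (z \in (A :|: B) :&: subtree parent x) &
          forall c, c \in children root parent x ->
            #|(A :\ z) :&: subtree parent c| = #|(B :\ z) :&: subtree parent c| ] in
  let C3 :=
    [/\ x \in S, requested parent S pi sigma x &
        exists a b, [/\ a \in leaves root parent, b \in leaves root parent,
          a \in A :&: subtree parent x, b \in B :&: subtree parent x &
          forall c, c \in children root parent x ->
            #|(A :\ a) :&: subtree parent c| = #|(B :\ b) :&: subtree parent c|
            /\ ~~ ((a \in subtree parent c) && (b \in subtree parent c))]] in
  [/\ C1 \/ C2 \/ C3, ~ (C1 /\ C2), ~ (C1 /\ C3) & ~ (C2 /\ C3)] /\
  (x \in S <->
     exists a b, [/\ a \in A :&: subtree parent x, b \in B :&: subtree parent x &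
          forall c, c \in children root parent x ->
            #|(A :\ a) :&: subtree parent c| = #|(B :\ b) :&: subtree parent c|
            /\ ~~ ((a \in subtree parent c) && (b \in subtree parent c))]).
Proof.
move=> A B x x_inner C1 C2 C3.
have in_S_wit := in_S_witnesses Htree Hpi_inj Hsigma_inj Hpi_leaf Hsigma_leaf Hid Huniq.
split; last first.
  split=> [/in_S_wit [a [b [_ _ ax bx bal]]] | ]; first by exists a, b.
  exact: (witnesses_in_S Htree Hpi_inj Hsigma_inj Hpi_leaf Hsigma_leaf Hid Huniq x_inner).
split; [| by case=> -[_ xNreq _] [_ /xNreq] | by case=> -[/negP xNS _ _] [/xNS]
             | by case=> -[/negP xNS _ _] [/xNS]].
have [xS | xNS] := boolP (x \in S).
  right; right; split=> //; last exact: in_S_wit.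
  by exists x; exact: (self_requested Hid xS).
have [x_req | xNreq] := requestedP parent S pi sigma x.
  right; left; split=> //.
  exact: (requested_notin_S_witness Htree HS Hpi_inj Hsigma_inj Hpi_leaf Hsigma_leaf
           Hid Huniq xNS x_req).
by left; split=> // c cx; exact: (card_subtree_unrequested Hpi_inj Hsigma_inj xNreq cx).
Qed.
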